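(* Let $(C,D)$ define an irreducible MSPP of order $p$ (a MAP with $C$ diagonal). Then $T_1^{\pi}\ge_{\mathrm{st}} T_1^{\alpha}$, i.e. $$\boldsymbol{\pi}e^{Ct}\mathbf{1}\ \ge\ \boldsymbol{\alpha}e^{Ct}\mathbf{1}\qquad\text{for all } t\ge 0.$$
   Context: A Markovian arrival process (MAP) of order $p$ is specified by $p\times p$ real matrices $C$ and $D$ such that $D$ has nonnegative entries, $C$ has nonnegative off-diagonal entries, and $Q=C+D$ is the generator (row sums zero) of an irreducible continuous-time Markov chain on $\{1,\dots,p\}$; $C$ is assumed nonsingular. An MSPP is a MAP with $C$ diagonal. $\mathbf{1}$ is the all-ones column vector. $\boldsymbol{\pi}$ is the stationary distribution of $Q$ ($\boldsymbol{\pi}Q=\mathbf{0}$, $\boldsymbol{\pi}\mathbf{1}=1$), and $\boldsymbol{\alpha}$ is the stationary distribution of $P=(-C)^{-1}D$ ($\boldsymbol{\alpha}P=\boldsymbol{\alpha}$, $\boldsymbol{\alpha}\mathbf{1}=1$). $T_1^{\boldsymbol{\eta}}$ denotes the time of the first event when the initial phase has distribution $\boldsymbol{\eta}$; $\mathbb{P}(T_1^{\boldsymbol{\eta}}>t)=\boldsymbol{\eta}e^{Ct}\mathbf{1}$. $X\ge_{\mathrm{st}}Y$ means $\mathbb{P}(X>t)\ge\mathbb{P}(Y>t)$ for all $t$. *)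

From Stdlib Require Import Arith Reals Lra.
Open Scope R_scope.

(* Matrices of order p are functions nat -> nat -> R, only indices < p matter;
   row vectors are functions nat -> R. *)

Fixpoint fsum (n : nat) (f : nat -> R) : R :=
  match n with
  | O => 0
  | S m => fsum m f + f m
  end.

Definition mmul (p : nat) (A B : nat -> nat -> R) : nat -> nat -> R :=
  fun i j => fsum p (fun k => A i k * B k j).

Definition madd (A B : nat -> nat -> R) : nat -> nat -> R :=
  fun i j => A i j + B i j.

Definition mopp (A : nat -> nat -> R) : nat -> nat -> R :=
  fun i j => - A i j.

Definition mid : nat -> nat -> R :=
  fun i j => if Nat.eqb i j then 1 else 0.

Fixpoint mpow (p : nat) (A : nat -> nat -> R) (n : nat) : nat -> nat -> R :=
  match n with
  | O => mid
  | S m => mmul p (mpow p A m) A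
  end.

Definition vmul (p : nat) (v : nat -> R) (A : nat -> nat -> R) : nat -> R :=
  fun j => fsum p (fun i => v i * A i j).

Definition vsum1 (p : nat) (v : nat -> R) : R := fsum p v.

Definition is_mexp (p : nat) (A : nat -> nat -> R) (t : R)
  (E : nat -> nat -> R) : Prop :=
  forall i j, (i < p)%nat -> (j < p)%nat ->
    infinite_sum (fun n => t ^ n / INR (fact n) * mpow p A n i j) (E i j).

Definition is_inverse (p : nat) (A B : nat -> nat -> R) : Prop :=
  (forall i j, (i < p)%nat -> (j < p)%nat -> mmul p A B i j = mid i j) /\
  (forall i j, (i < p)%nat -> (j < p)%nat -> mmul p B A i j = mid i j).

Inductive reach (p : nat) (Q : nat -> nat -> R) : nat -> nat -> Prop :=
  | reach_refl i : reach p Q i i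
  | reach_step i k j : (k < p)%nat -> i <> k -> 0 < Q i k ->
      reach p Q k j -> reach p Q i j.

Definition is_generator (p : nat) (Q : nat -> nat -> R) : Prop :=
  (forall i j, (i < p)%nat -> (j < p)%nat -> i <> j -> 0 <= Q i j) /\
  (forall i, (i < p)%nat -> fsum p (fun j => Q i j) = 0).

Definition irreducible (p : nat) (Q : nat -> nat -> R) : Prop :=
  forall i j, (i < p)%nat -> (j < p)%nat -> reach p Q i j.

Definition is_MAP (p : nat) (C D : nat -> nat -> R) : Prop :=
  (forall i j, (i < p)%nat -> (j < p)%nat -> 0 <= D i j) /\
  (forall i j, (i < p)%nat -> (j < p)%nat -> i <> j -> 0 <= C i j) /\
  is_generator p (madd C D) /\
  irreducible p (madd C D) /\
  (exists Ci, is_inverse p C Ci).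

Definition is_MSPP (p : nat) (C D : nat -> nat -> R) : Prop :=
  is_MAP p C D /\
  (forall i j, (i < p)%nat -> (j < p)%nat -> i <> j -> C i j = 0).

Definition is_stat_gen (p : nat) (Q : nat -> nat -> R) (v : nat -> R) : Prop :=
  (forall j, (j < p)%nat -> vmul p v Q j = 0) /\ vsum1 p v = 1.

Definition is_stat_dtmc (p : nat) (P : nat -> nat -> R) (v : nat -> R) : Prop :=
  (forall j, (j < p)%nat -> vmul p v P j = v j) /\ vsum1 p v = 1.

(* Since C is diagonal, P = -C^-1 D has rows D_ij / c_i with c_i = -C_ii, so
   alpha_i / c_i is left-null for Q = C + D; by irreducibility it is a
   multiple of pi, i.e. alpha_i = pi_i c_i / (sum_k pi_k c_k).  As e^{Ct} is
   the diagonal matrix of the e^{-c_i t}, the claim becomes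
   (sum pi_i c_i e^{-c_i t}) <= (sum pi_i c_i) (sum pi_i e^{-c_i t}), which is
   Chebyshev's sum inequality for the oppositely ordered c_i and e^{-c_i t}. *)

From Stdlib Require Import Reals Lra Lia FunctionalExtensionality.
Open Scope R_scope.

Lemma fsum_ext n f g :
  (forall i, (i < n)%nat -> f i = g i) -> fsum n f = fsum n g.
Proof.
  induction n as [|n IH]; simpl; intros H; [reflexivity|].
  rewrite IH, H; auto; intros; apply H; lia.
Qed.

Lemma fsum_0 n : fsum n (fun _ => 0) = 0.
Proof. induction n; simpl; [reflexivity | rewrite IHn; ring]. Qed.

Lemma fsum_plus n f g : fsum n (fun i => f i + g i) = fsum n f + fsum n g.
Proof. induction n; simpl; [ring | rewrite IHn; ring]. Qed.

Lemma fsum_scal n c f : fsum n (fun i => c * f i) = c * fsum n f.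
Proof. induction n; simpl; [ring | rewrite IHn; ring]. Qed.

Lemma fsum_opp n f : fsum n (fun i => - f i) = - fsum n f.
Proof. induction n; simpl; [ring | rewrite IHn; ring]. Qed.

Lemma fsum_lin4 n a b c d f g h k :
  fsum n (fun j => a * f j + b * g j + c * h j + d * k j) =
  a * fsum n f + b * fsum n g + c * fsum n h + d * fsum n k.
Proof. induction n; simpl; [ring | rewrite IHn; ring]. Qed.

Lemma fsum_swap n m (f : nat -> nat -> R) :
  fsum n (fun j => fsum m (fun i => f i j)) =
  fsum m (fun i => fsum n (fun j => f i j)).
Proof.
  induction n as [|n IH]; simpl.
  - induction m as [|m IHm]; simpl; [reflexivity | rewrite <- IHm; ring].
  - rewrite IH, <- fsum_plus; reflexivity.
Qed.

Lemma fsum_nonneg n f : (forall i, (i < n)%nat -> 0 <= f i) -> 0 <= fsum n f.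
Proof.
  induction n as [|n IH]; simpl; intros H; [lra|].
  assert (0 <= f n) by (apply H; lia).
  assert (0 <= fsum n f) by (apply IH; intros; apply H; lia).
  lra.
Qed.

Lemma fsum_pos n f :
  (0 < n)%nat -> (forall i, (i < n)%nat -> 0 < f i) -> 0 < fsum n f.
Proof.
  intros Hn H; destruct n as [|n]; [lia|]; simpl.
  assert (0 < f n) by (apply H; lia).
  assert (0 <= fsum n f) by (apply fsum_nonneg; intros; left; apply H; lia).
  lra.
Qed.

Lemma fsum_nonneg_eq0 n f :
  (forall i, (i < n)%nat -> 0 <= f i) -> fsum n f = 0 ->
  forall i, (i < n)%nat -> f i = 0.
Proof.
  induction n as [|n IH]; simpl; intros H Hs i Hi; [lia|].
  assert (0 <= f n) by (apply H; lia).
  assert (0 <= fsum n f) by (apply fsum_nonneg; intros; apply H; lia).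
  destruct (Nat.eq_dec i n) as [->|]; [lra|].
  apply IH; [intros; apply H; lia | lra | lia].
Qed.

Lemma fsum_single n f j :
  (j < n)%nat -> (forall i, (i < n)%nat -> i <> j -> f i = 0) -> fsum n f = f j.
Proof.
  induction n as [|n IH]; simpl; intros Hj H; [lia|].
  destruct (Nat.eq_dec j n) as [->|Hjn].
  - rewrite (fsum_ext n f (fun _ => 0)) by (intros; apply H; lia).
    rewrite fsum_0; ring.
  - rewrite IH, (H n); [ring | lia | auto | lia | intros; apply H; lia].
Qed.

Lemma fsum_vmul_mulv p Q v s :
  fsum p (fun i => v i * fsum p (fun j => Q i j * s j)) =
  fsum p (fun j => vmul p v Q j * s j).
Proof.
  unfold vmul.
  rewrite (fsum_ext p _ (fun i => fsum p (fun j => v i * Q i j * s j)))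
    by (intros; rewrite <- fsum_scal; apply fsum_ext; intros; ring).
  rewrite <- (fsum_swap p p (fun i j => v i * Q i j * s j)).
  apply fsum_ext; intros j _.
  rewrite Rmult_comm, <- fsum_scal; apply fsum_ext; intros; ring.
Qed.

Lemma chebyshev_sum n w f h :
  (forall i, (i < n)%nat -> 0 <= w i) ->
  (forall i j, (i < n)%nat -> (j < n)%nat -> 0 <= (f i - f j) * (h i - h j)) ->
  fsum n (fun i => w i * f i) * fsum n (fun i => w i * h i) <=
  fsum n w * fsum n (fun i => w i * f i * h i).
Proof.
  intros Hw Hfh.
  set (W := fsum n w); set (F := fsum n (fun i => w i * f i));
  set (H := fsum n (fun i => w i * h i));
  set (FH := fsum n (fun i => w i * f i * h i)).
  assert (Hdouble : fsum n (fun i => fsum n (fun j =>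
            w i * w j * ((f i - f j) * (h i - h j)))) = 2 * (W * FH - F * H)).
  { rewrite (fsum_ext n _ (fun i => W * (w i * f i * h i) + FH * w i
                                 + (- H) * (w i * f i) + (- F) * (w i * h i))).
    - rewrite fsum_lin4; fold W FH F H; ring.
    - intros i _.
      rewrite (fsum_ext n _ (fun j => (w i * f i * h i) * w j + w i * (w j * f j * h j)
                  + (- (w i * f i)) * (w j * h j) + (- (w i * h i)) * (w j * f j)))
        by (intros; ring).
      rewrite fsum_lin4; fold W FH F H; ring. }
  assert (0 <= fsum n (fun i => fsum n (fun j =>
            w i * w j * ((f i - f j) * (h i - h j))))).
  { apply fsum_nonneg; intros i Hi; apply fsum_nonneg; intros j Hj.
    apply Rmult_le_pos; [apply Rmult_le_pos|]; auto. }
  lra.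
Qed.

Lemma exp_scale_similarly_ordered a b t :
  0 <= t -> 0 <= (a - b) * (exp (a * t) - exp (b * t)).
Proof.
  intros Ht.
  assert (Hmono : forall x y, x <= y -> exp (x * t) <= exp (y * t)).
  { intros x y Hxy.
    destruct (Rle_lt_or_eq_dec _ _ (Rmult_le_compat_r t x y Ht Hxy)) as [Hlt|Heq].
    - left; apply exp_increasing, Hlt.
    - right; rewrite Heq; reflexivity. }
  destruct (Rle_dec a b) as [Hab|Hab].
  - pose proof (Hmono a b Hab); nra.
  - pose proof (Hmono b a ltac:(lra)); nra.
Qed.

Definition is_diag (p : nat) (A : nat -> nat -> R) : Prop :=
  forall i j, (i < p)%nat -> (j < p)%nat -> i <> j -> A i j = 0.

Lemma mmul_diag_l p A B i j :
  is_diag p A -> (i < p)%nat -> mmul p A B i j = A i i * B i j.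
Proof.
  intros HA Hi; unfold mmul.
  apply (fsum_single p (fun k => A i k * B k j) i Hi).
  intros k Hk Hki; rewrite HA; auto; ring.
Qed.

Lemma vsum1_vmul_diag p v E :
  is_diag p E -> vsum1 p (vmul p v E) = fsum p (fun i => v i * E i i).
Proof.
  intros HE; unfold vsum1, vmul; apply fsum_ext; intros j Hj.
  apply (fsum_single p (fun i => v i * E i j) j Hj).
  intros i Hi Hij; rewrite HE; auto; ring.
Qed.

Lemma mpow_diag p A n i j :
  is_diag p A -> (i < p)%nat -> (j < p)%nat ->
  mpow p A n i j = if Nat.eqb i j then A i i ^ n else 0.
Proof.
  intros HA; revert i j; induction n as [|n IH]; intros i j Hi Hj; simpl.
  - reflexivity.
  - unfold mmul; rewrite (fsum_single p _ j Hj).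
    + rewrite IH by assumption; destruct (Nat.eqb_spec i j) as [<-|]; simpl; ring.
    + intros k Hk Hkj; rewrite HA; auto; ring.
Qed.

Lemma infinite_sum_0 : infinite_sum (fun _ => 0) 0.
Proof.
  intros eps Heps; exists 0%nat; intros n _.
  rewrite sum_cte; unfold R_dist.
  rewrite Rmult_0_l, Rminus_0_r, Rabs_R0; exact Heps.
Qed.

Lemma mexp_diag p A t E :
  is_diag p A -> is_mexp p A t E ->
  forall i j, (i < p)%nat -> (j < p)%nat ->
  E i j = if Nat.eqb i j then exp (A i i * t) else 0.
Proof.
  intros HA HE i j Hi Hj; specialize (HE i j Hi Hj).
  apply (uniqueness_sum _ _ _ HE).
  destruct (Nat.eqb_spec i j) as [<-|Hij].
  - replace (fun n => t ^ n / INR (Factorial.fact n) * mpow p A n i i)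
      with (fun n => / INR (Factorial.fact n) * (A i i * t) ^ n).
    + exact (proj2_sig (exist_exp (A i i * t))).
    + extensionality n; rewrite mpow_diag, Nat.eqb_refl, Rpow_mult_distr by assumption.
      unfold Rdiv; ring.
  - replace (fun n => t ^ n / INR (Factorial.fact n) * mpow p A n i j) with (fun _ : nat => 0).
    + exact infinite_sum_0.
    + extensionality n; rewrite mpow_diag by assumption.
      destruct (Nat.eqb_spec i j); [contradiction | ring].
Qed.

Lemma mexp_is_diag p A t E : is_diag p A -> is_mexp p A t E -> is_diag p E.
Proof.
  intros HA HE i j Hi Hj Hij; rewrite (mexp_diag p A t E HA HE i j Hi Hj).
  destruct (Nat.eqb_spec i j); [contradiction | reflexivity].
Qed.

Lemma diag_right_inverse p A B :
  is_diag p A ->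
  (forall i j, (i < p)%nat -> (j < p)%nat -> mmul p A B i j = mid i j) ->
  is_diag p B /\ forall i, (i < p)%nat -> A i i * B i i = 1.
Proof.
  intros HA HAB.
  assert (HAB' : forall i j, (i < p)%nat -> (j < p)%nat -> A i i * B i j = mid i j)
    by (intros i j Hi Hj; rewrite <- (mmul_diag_l p A B i j HA Hi); auto).
  assert (Hii : forall i, (i < p)%nat -> A i i * B i i = 1).
  { intros i Hi; rewrite HAB'; unfold mid; rewrite ?Nat.eqb_refl; auto. }
  split; [|exact Hii].
  intros i j Hi Hj Hij.
  assert (HA0 : A i i <> 0) by (intro H0; specialize (Hii i Hi); rewrite H0 in Hii; lra).
  specialize (HAB' i j Hi Hj); unfold mid in HAB'.
  destruct (Nat.eqb_spec i j) as [|_]; [contradiction|].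
  apply Rmult_integral in HAB' as [|]; [contradiction | assumption].
Qed.

Definition is_left_null (p : nat) (Q : nat -> nat -> R) (v : nat -> R) : Prop :=
  forall j, (j < p)%nat -> vmul p v Q j = 0.

Lemma left_null_opp p Q v : is_left_null p Q v -> is_left_null p Q (fun i => - v i).
Proof.
  intros H j Hj; unfold vmul.
  rewrite (fsum_ext p _ (fun i => - (v i * Q i j))) by (intros; ring).
  rewrite fsum_opp; fold (vmul p v Q j); rewrite H; auto; ring.
Qed.

Section GeneratorLeftNull.

Variables (p : nat) (Q : nat -> nat -> R) (v : nat -> R).
Hypothesis Q_gen : is_generator p Q.
Hypothesis v_null : is_left_null p Q v.

(* With s the indicator of {v > 0}, each term v_i (Q s)_i is <= 0 and they sum
   to (v Q) s = 0; for v_i > 0 this forces Q_ik = 0 whenever v_k <= 0. *)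
Lemma left_null_pos_step i k :
  (i < p)%nat -> (k < p)%nat -> i <> k -> 0 < Q i k -> 0 < v i -> 0 < v k.
Proof.
  destruct Q_gen as [Q_offdiag Q_row].
  intros Hi Hk Hik HQ Hv.
  set (s j := if Rlt_dec 0 (v j) then 1 else 0).
  set (r l := fsum p (fun j => Q l j * s j)).
  set (r' l := fsum p (fun j => Q l j * (1 - s j))).
  assert (Hrr' : forall l, (l < p)%nat -> r l = - r' l).
  { intros l Hl; specialize (Q_row l Hl).
    rewrite (fsum_ext p _ (fun j => Q l j * s j + Q l j * (1 - s j))) in Q_row
      by (intros; ring).
    rewrite fsum_plus in Q_row; unfold r, r'; lra. }
  assert (Hr'_terms : forall l, (l < p)%nat -> 0 < v l ->
            forall j, (j < p)%nat -> 0 <= Q l j * (1 - s j)).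
  { intros l Hl Hvl j Hj; unfold s; destruct (Rlt_dec 0 (v j)); [lra|].
    assert (l <> j) by (intros ->; contradiction).
    rewrite Rminus_0_r, Rmult_1_r; apply Q_offdiag; auto. }
  assert (Hterm : forall l, (l < p)%nat -> 0 <= - (v l * r l)).
  { intros l Hl; destruct (Rlt_dec 0 (v l)) as [Hvl|Hvl].
    - rewrite Hrr' by assumption.
      assert (0 <= r' l) by (apply fsum_nonneg, Hr'_terms; assumption).
      nra.
    - assert (0 <= r l).
      { apply fsum_nonneg; intros j Hj; unfold s; destruct (Rlt_dec 0 (v j)); [|lra].
        assert (l <> j) by (intros ->; contradiction).
        rewrite Rmult_1_r; apply Q_offdiag; auto. }
      nra. }
  assert (Hsum : fsum p (fun l => - (v l * r l)) = 0).
  { rewrite fsum_opp; unfold r; rewrite fsum_vmul_mulv.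
    rewrite (fsum_ext p _ (fun _ => 0)) by (intros; rewrite v_null; auto; ring).
    rewrite fsum_0; ring. }
  assert (Hr'i : r' i = 0).
  { pose proof (fsum_nonneg_eq0 p _ Hterm Hsum i Hi) as H0.
    cbv beta in H0; rewrite Hrr' in H0 by assumption; nra. }
  pose proof (fsum_nonneg_eq0 p _ (Hr'_terms i Hi Hv) Hr'i k Hk) as Hk0.
  unfold s in Hk0; destruct (Rlt_dec 0 (v k)); [assumption | nra].
Qed.

Lemma left_null_pos_reach i j : reach p Q i j -> (i < p)%nat -> 0 < v i -> 0 < v j.
Proof.
  induction 1 as [|i k j Hk Hik HQ _ IH]; intros Hi Hv; [assumption|].
  apply IH; [assumption|]; apply (left_null_pos_step i k); assumption.
Qed.

End GeneratorLeftNull.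

Lemma irreducible_left_null_pos p Q v i :
  is_generator p Q -> irreducible p Q -> is_left_null p Q v ->
  (i < p)%nat -> 0 < v i -> forall j, (j < p)%nat -> 0 < v j.
Proof.
  intros Hgen Hirr Hv Hi Hvi j Hj.
  exact (left_null_pos_reach p Q v Hgen Hv i j (Hirr i j Hi Hj) Hi Hvi).
Qed.

Lemma irreducible_left_null_sum0 p Q v :
  is_generator p Q -> irreducible p Q -> is_left_null p Q v ->
  fsum p v = 0 -> forall i, (i < p)%nat -> v i = 0.
Proof.
  intros Hgen Hirr Hv Hsum i Hi.
  assert (Hp : (0 < p)%nat) by lia.
  destruct (Rtotal_order (v i) 0) as [Hneg|[Hzero|Hpos]]; [exfalso| assumption |exfalso].
  - assert (Hall := irreducible_left_null_pos p Q _ i Hgen Hirr (left_null_opp p Q v Hv)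
                      Hi ltac:(lra)).
    pose proof (fsum_pos p _ Hp Hall); rewrite fsum_opp in *; lra.
  - pose proof (fsum_pos p v Hp (irreducible_left_null_pos p Q v i Hgen Hirr Hv Hi Hpos)).
    lra.
Qed.

Lemma irreducible_stat_gen_nonneg p Q v :
  is_generator p Q -> irreducible p Q -> is_stat_gen p Q v ->
  forall i, (i < p)%nat -> 0 <= v i.
Proof.
  intros Hgen Hirr [Hv Hsum] i Hi.
  apply Rnot_lt_le; intros Hneg.
  assert (Hall := irreducible_left_null_pos p Q _ i Hgen Hirr (left_null_opp p Q v Hv)
                    Hi ltac:(lra)).
  pose proof (fsum_pos p _ ltac:(lia) Hall).
  unfold vsum1 in Hsum; rewrite fsum_opp in *; lra.
Qed.

Section MSPP.

Variables (p : nat) (C D Ci : nat -> nat -> R) (pi alpha : nat -> R).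
Hypothesis C_diag : is_diag p C.
Hypothesis D_nonneg : forall i j, (i < p)%nat -> (j < p)%nat -> 0 <= D i j.
Hypothesis Q_gen : is_generator p (madd C D).
Hypothesis Q_irr : irreducible p (madd C D).
Hypothesis C_Ci : forall i j, (i < p)%nat -> (j < p)%nat -> mmul p C Ci i j = mid i j.
Hypothesis pi_stat : is_stat_gen p (madd C D) pi.
Hypothesis alpha_stat : is_stat_dtmc p (mmul p (mopp Ci) D) alpha.

Lemma mspp_diag_rowsum i : (i < p)%nat -> - C i i = fsum p (D i).
Proof.
  intros Hi; destruct Q_gen as [_ Q_row]; specialize (Q_row i Hi).
  unfold madd in Q_row; rewrite fsum_plus, (fsum_single p (C i) i Hi) in Q_row.
  - lra.
  - intros; apply C_diag; auto.
Qed.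

Lemma mspp_diag_nonpos i : (i < p)%nat -> C i i <= 0.
Proof.
  intros Hi; pose proof (mspp_diag_rowsum i Hi).
  assert (0 <= fsum p (D i)) by (apply fsum_nonneg; intros; apply D_nonneg; auto).
  lra.
Qed.

Lemma mspp_diag_neq0 i : (i < p)%nat -> C i i <> 0.
Proof.
  intros Hi H0; pose proof (proj2 (diag_right_inverse p C Ci C_diag C_Ci) i Hi) as H.
  rewrite H0 in H; lra.
Qed.

Lemma mspp_embedded_entry i j :
  (i < p)%nat -> (j < p)%nat -> mmul p (mopp Ci) D i j = D i j / - C i i.
Proof.
  intros Hi Hj; destruct (diag_right_inverse p C Ci C_diag C_Ci) as [Ci_diag Hinv].
  assert (mopp_diag : is_diag p (mopp Ci))
    by (intros k l Hk Hl Hkl; unfold mopp; rewrite Ci_diag; auto; ring).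
  rewrite mmul_diag_l by assumption; unfold mopp.
  pose proof (mspp_diag_neq0 i Hi) as HC.
  assert (Ci i i = / C i i) as ->.
  { apply (Rmult_eq_reg_l (C i i)); [rewrite Rinv_r, Hinv; auto | exact HC]. }
  field; exact HC.
Qed.

Lemma mspp_alpha_scaled_left_null :
  is_left_null p (madd C D) (fun i => alpha i / - C i i).
Proof.
  intros j Hj; unfold vmul, madd.
  rewrite (fsum_ext p _ (fun i => alpha i / - C i i * C i j + alpha i * (D i j / - C i i)))
    by (intros; unfold Rdiv; ring).
  rewrite fsum_plus, (fsum_single p _ j Hj)
    by (intros i Hi Hij; rewrite (C_diag i j); auto; ring).
  rewrite (fsum_ext p _ (fun i => alpha i * mmul p (mopp Ci) D i j))
    by (intros; rewrite mspp_embedded_entry; auto).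
  fold (vmul p alpha (mmul p (mopp Ci) D) j); rewrite (proj1 alpha_stat j Hj).
  field; apply mspp_diag_neq0, Hj.
Qed.

Lemma mspp_alpha_eq i :
  (i < p)%nat ->
  alpha i = fsum p (fun k => alpha k / - C k k) * pi i * - C i i.
Proof.
  intros Hi; set (g := fsum p (fun k => alpha k / - C k k)).
  set (u k := alpha k / - C k k + - g * pi k).
  assert (Hu : is_left_null p (madd C D) u).
  { intros j Hj; unfold vmul, u.
    rewrite (fsum_ext p _ (fun k => alpha k / - C k k * madd C D k j
                                   + - g * (pi k * madd C D k j))) by (intros; ring).
    rewrite fsum_plus, fsum_scal.
    fold (vmul p (fun k => alpha k / - C k k) (madd C D) j) (vmul p pi (madd C D) j).
    rewrite mspp_alpha_scaled_left_null, (proj1 pi_stat) by assumption; ring. }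
  assert (Hsum : fsum p u = 0).
  { unfold u; rewrite fsum_plus, fsum_scal; fold g.
    pose proof (proj2 pi_stat) as H1; unfold vsum1 in H1; rewrite H1; ring. }
  pose proof (irreducible_left_null_sum0 p _ u Q_gen Q_irr Hu Hsum i Hi) as H0.
  unfold u in H0; pose proof (mspp_diag_neq0 i Hi).
  field_simplify_eq in H0; [lra | lra].
Qed.

Lemma mspp_alpha_scale_norm :
  fsum p (fun k => alpha k / - C k k) * - fsum p (fun i => pi i * C i i) = 1.
Proof.
  destruct alpha_stat as [_ H1]; unfold vsum1 in H1.
  rewrite <- H1, <- fsum_opp, <- fsum_scal.
  apply fsum_ext; intros i Hi; rewrite (mspp_alpha_eq i Hi); ring.
Qed.

Lemma mspp_mean_rate_pos : 0 < - fsum p (fun i => pi i * C i i).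
Proof.
  assert (H : 0 <= - fsum p (fun i => pi i * C i i)).
  { rewrite <- fsum_opp; apply fsum_nonneg; intros i Hi.
    pose proof (mspp_diag_nonpos i Hi).
    pose proof (irreducible_stat_gen_nonneg p _ pi Q_gen Q_irr pi_stat i Hi); nra. }
  destruct (Rle_lt_or_eq_dec _ _ H) as [|H0]; [assumption|].
  pose proof mspp_alpha_scale_norm as Hnorm; rewrite <- H0, Rmult_0_r in Hnorm; lra.
Qed.

Lemma mspp_alpha_formula i :
  (i < p)%nat -> alpha i = pi i * - C i i / - fsum p (fun k => pi k * C k k).
Proof.
  intros Hi; pose proof mspp_alpha_scale_norm as Hnorm; pose proof mspp_mean_rate_pos as HS.
  rewrite (mspp_alpha_eq i Hi).
  set (S := - fsum p (fun k => pi k * C k k)) in *.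
  set (g := fsum p (fun k => alpha k / - C k k)) in *.
  replace g with (/ S) by (apply (Rmult_eq_reg_r S); [rewrite Rinv_l, Hnorm | ]; lra).
  field; lra.
Qed.

End MSPP.

Theorem proposition3 (p : nat) (C D Ci : nat -> nat -> R)
  (pi alpha : nat -> R) :
  is_MSPP p C D ->
  is_inverse p C Ci ->
  is_stat_gen p (madd C D) pi ->
  is_stat_dtmc p (mmul p (mopp Ci) D) alpha ->
  forall (t : R), 0 <= t ->
  forall (E : nat -> nat -> R), is_mexp p C t E ->
    vsum1 p (vmul p alpha E) <= vsum1 p (vmul p pi E).
Proof.
  intros [[D_nonneg [_ [Q_gen [Q_irr _]]]] C_diag] [C_Ci _] pi_stat alpha_stat
         t Ht E HE.
  set (S := - fsum p (fun i => pi i * C i i)).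
  set (e i := exp (C i i * t)).
  assert (HS : 0 < S) by exact (mspp_mean_rate_pos p C D Ci pi alpha C_diag D_nonneg
                                  Q_gen Q_irr C_Ci pi_stat alpha_stat).
  assert (Hdiag_sum : forall v, vsum1 p (vmul p v E) = fsum p (fun i => v i * e i)).
  { intros v; rewrite vsum1_vmul_diag by exact (mexp_is_diag p C t E C_diag HE).
    apply fsum_ext; intros i Hi; rewrite (mexp_diag p C t E C_diag HE i i Hi Hi).
    rewrite Nat.eqb_refl; reflexivity. }
  assert (Hcheb := chebyshev_sum p pi (fun i => C i i) e
                     (irreducible_stat_gen_nonneg p _ pi Q_gen Q_irr pi_stat)
                     (fun i j _ _ => exp_scale_similarly_ordered (C i i) (C j j) t Ht)).
  pose proof (proj2 pi_stat) as Hpi1; unfold vsum1 in Hpi1; rewrite Hpi1 in Hcheb.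
  rewrite !Hdiag_sum.
  rewrite (fsum_ext p _ (fun i => / S * - (pi i * C i i * e i))).
  2: { intros i Hi; rewrite (mspp_alpha_formula p C D Ci pi alpha C_diag D_nonneg Q_gen
                               Q_irr C_Ci pi_stat alpha_stat i Hi).
       fold S; field; lra. }
  rewrite fsum_scal, fsum_opp.
  apply (Rmult_le_reg_l S); [exact HS|].
  rewrite <- Rmult_assoc, Rinv_r by lra.
  unfold S; rewrite Ropp_mult_distr_l_reverse; lra.
Qed.
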